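(* Let $G=(V,E)$ be a connected graph on at least three vertices and let $E'$ be a minimum-size $(3,1)$-completion set of $G$. Then for every edge $e'\in E'$ there exists a triangle in $G\cup E'$ containing $e'$ such that at least one edge of this triangle is an edge of $G$ that is unsaturated in $G$.
   Context: A connected graph has a $(3,1)$-cover if each of its edges lies in at least one triangle. A set $E'\subseteq(V\times V)\setminus E$ of non-edges of $G$ is a $(3,1)$-completion set if $G\cup E'$ has a $(3,1)$-cover. An edge $e\in E$ is unsaturated in $G$ if it is contained in no triangle of $G$. *)

From mathcomp Require Import all_boot.
Set Implicit Arguments. Unset Strict Implicit. Unset Printing Implicit Defensive.

Definition simple_graph (T : finType) (g : rel T) : Prop :=
  symmetric g /\ irreflexive g.

Definition connected_graph (T : finType) (g : rel T) : Prop :=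
  forall x y : T, connect g x y.

Definition non_edge_set (T : finType) (g : rel T) (F : {set {set T}}) : Prop :=
  forall e, e \in F -> exists u v, [/\ u != v, e = [set u; v] & ~~ g u v].

Definition add_edges (T : finType) (g : rel T) (F : {set {set T}}) : rel T :=
  fun u v => g u v || ((u != v) && ([set u; v] \in F)).

Definition in_triangle (T : finType) (h : rel T) (u v : T) : Prop :=
  exists w : T, h u w && h v w.

Definition has_31_cover (T : finType) (h : rel T) : Prop :=
  forall u v : T, h u v -> in_triangle h u v.

Definition completion_set (T : finType) (g : rel T) (F : {set {set T}}) : Prop :=
  non_edge_set g F /\ has_31_cover (add_edges g F).

Definition min_completion_set (T : finType) (g : rel T) (F : {set {set T}}) : Prop :=
  completion_set g F /\ forall F', completion_set g F' -> #|F| <= #|F'|.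

Definition unsaturated (T : finType) (g : rel T) (u v : T) : Prop :=
  g u v /\ ~ in_triangle g u v.

From mathcomp Require Import all_boot.
Set Implicit Arguments. Unset Strict Implicit. Unset Printing Implicit Defensive.

(* Call an added edge anchored if it lies in a triangle of G ∪ F having an
   unsaturated side.  The anchored edges of F already form a completion set:
   an edge that needs help is either an unsaturated edge of G or an anchored
   edge, and in both cases its covering triangle has an unsaturated side, so
   the other two sides of that triangle are edges of G or anchored edges as
   well.  Minimality of F then forces every edge of F to be anchored. *)

Definition unsaturatedb (T : finType) (g : rel T) (x y : T) : bool :=
  g x y && ~~ [exists z, g x z && g y z].

Definition has_unsaturated_side (T : finType) (g : rel T) (x y z : T) : bool :=
  [|| unsaturatedb g x y, unsaturatedb g x z | unsaturatedb g y z].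

Definition anchored_edge (T : finType) (g : rel T) (F : {set {set T}}) (x y : T) :=
  [exists z, [&& add_edges g F x z, add_edges g F y z & has_unsaturated_side g x y z]].

Definition anchored_part (T : finType) (g : rel T) (F : {set {set T}}) :=
  [set e in F | [exists x, exists y, (e == [set x; y]) && anchored_edge g F x y]].

Lemma unsaturatedP (T : finType) (g : rel T) (x y : T) :
  reflect (unsaturated g x y) (unsaturatedb g x y).
Proof.
apply: (iffP andP) => -[gxy no_tri]; split=> //.
  by move=> [z xyz]; case/negP: no_tri; apply/existsP; exists z.
by apply/existsP=> -[z xyz]; apply: no_tri; exists z.
Qed.

Lemma add_edges_subset (T : finType) (g : rel T) (F1 F2 : {set {set T}}) x y :
  F1 \subset F2 -> add_edges g F1 x y -> add_edges g F2 x y.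
Proof.
move=> /subsetP sF12 /orP[gxy | /andP[nxy xyF1]]; first by rewrite /add_edges gxy.
by rewrite /add_edges nxy sF12 ?orbT.
Qed.

Lemma anchored_part_subset (T : finType) (g : rel T) (F : {set {set T}}) :
  anchored_part g F \subset F.
Proof. by apply/subsetP=> e; rewrite inE => /andP[]. Qed.

Section Symmetric.

Variables (T : finType) (g : rel T) (F : {set {set T}}).
Hypothesis sym_g : symmetric g.

Lemma add_edgesC x y : add_edges g F x y = add_edges g F y x.
Proof. by rewrite /add_edges sym_g eq_sym setUC. Qed.

Lemma unsaturatedbC x y : unsaturatedb g x y = unsaturatedb g y x.
Proof.
rewrite /unsaturatedb sym_g; congr (_ && ~~ _).
by apply: eq_existsb => z; rewrite andbC.
Qed.

Lemma has_unsaturated_sideCl x y z :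
  has_unsaturated_side g x y z = has_unsaturated_side g y x z.
Proof.
by rewrite /has_unsaturated_side (unsaturatedbC y x) (orbC (unsaturatedb g x z)).
Qed.

Lemma has_unsaturated_sideCr x y z :
  has_unsaturated_side g x y z = has_unsaturated_side g x z y.
Proof. by rewrite /has_unsaturated_side (unsaturatedbC z y) orbCA. Qed.

Lemma anchored_edgeC x y : anchored_edge g F x y = anchored_edge g F y x.
Proof.
by apply: eq_existsb => z; rewrite has_unsaturated_sideCl andbCA.
Qed.

Lemma mem_anchored_part x y : x != y ->
  ([set x; y] \in anchored_part g F) = ([set x; y] \in F) && anchored_edge g F x y.
Proof.
move=> nxy; rewrite inE; congr (_ && _); apply/existsP/idP => [|anch]; last first.
  by exists x; apply/existsP; exists y; rewrite eqxx.
case=> a /existsP[b /andP[/eqP xy_ab anch]].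
have /set2P[] : x \in [set a; b] by rewrite -xy_ab set21.
all: have /set2P[] : y \in [set a; b] by rewrite -xy_ab set22.
all: move=> y_ab x_ab; rewrite x_ab y_ab ?eqxx // in nxy *.
by rewrite anchored_edgeC.
Qed.

Lemma add_edges_anchored x y z :
  add_edges g F x y -> add_edges g F x z -> add_edges g F y z ->
  has_unsaturated_side g x y z -> add_edges g (anchored_part g F) x y.
Proof.
move=> /orP[gxy | /andP[nxy xyF]] xz yz unsat; first by rewrite /add_edges gxy.
rewrite /add_edges mem_anchored_part // nxy xyF /=.
by apply/orP; right; apply/existsP; exists z; rewrite xz yz unsat.
Qed.

Lemma anchored_triangle x y w :
  add_edges g F x y -> add_edges g F x w -> add_edges g F y w ->
  has_unsaturated_side g x y w -> in_triangle (add_edges g (anchored_part g F)) x y.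
Proof.
move=> xy xw yw unsat; exists w; apply/andP; split.
  apply: (add_edges_anchored xw xy); first by rewrite add_edgesC.
  by rewrite -has_unsaturated_sideCr.
apply: (add_edges_anchored (z := x) yw); rewrite 1?add_edgesC //.
by rewrite has_unsaturated_sideCr has_unsaturated_sideCl.
Qed.

Lemma anchored_part_cover :
  has_31_cover (add_edges g F) -> has_31_cover (add_edges g (anchored_part g F)).
Proof.
move=> cover x y xy_anch.
have xy := add_edges_subset (anchored_part_subset g F) xy_anch.
case/orP: xy_anch => [gxy | /andP[nxy]].
  have [/existsP[w /andP[xw yw]] | no_tri] := boolP [exists w, g x w && g y w].
    by exists w; rewrite /add_edges xw yw.
  have [w /andP[xw yw]] := cover x y xy.
  apply: (anchored_triangle xy xw yw).
  by rewrite /has_unsaturated_side /unsaturatedb gxy no_tri.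
rewrite mem_anchored_part // => /andP[_ /existsP[w /and3P[xw yw unsat]]].
exact: anchored_triangle xy xw yw unsat.
Qed.

Lemma anchored_part_completion :
  completion_set g F -> completion_set g (anchored_part g F).
Proof.
move=> [non_edges cover]; split; last exact: anchored_part_cover.
by move=> e /(subsetP (anchored_part_subset g F)); apply: non_edges.
Qed.

Lemma min_completion_anchored :
  min_completion_set g F -> anchored_part g F = F.
Proof.
move=> [completeF minF]; apply/eqP; rewrite eqEcard anchored_part_subset.
exact: minF (anchored_part_completion completeF).
Qed.

End Symmetric.

Theorem lemma11 (T : finType) (g : rel T) (F : {set {set T}}) :
  simple_graph g -> connected_graph g -> 3 <= #|T| ->
  min_completion_set g F ->
  forall u v : T, [set u; v] \in F -> u != v ->
  exists w : T,
    [/\ add_edges g F u w, add_edges g F v w &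
        [\/ unsaturated g u v, unsaturated g u w | unsaturated g v w]].
Proof.
move=> [sym_g _] _ _ minF u v uvF nuv.
have : [set u; v] \in anchored_part g F by rewrite min_completion_anchored.
rewrite mem_anchored_part // => /andP[_ /existsP[w /and3P[uw vw unsat]]].
exists w; split=> //.
by case/or3P: unsat => /unsaturatedP; [apply: Or31 | apply: Or32 | apply: Or33].
Qed.
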